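(* For every $\alpha\ge1$ and $\varepsilon>0$ there is no deterministic $\alpha$-approximation algorithm for the Weighted Monotone Subset Minimization problem in the membership model which runs in time $\left(\mathrm{brute}(\alpha)-\varepsilon\right)^n\cdot n^{O(1)}$, where $n=|U|$.
   Context: A set system $\mathcal{F}\subseteq 2^U$ over a finite set $U$ is monotone if $U\in\mathcal{F}$ and whenever $T\subseteq S\subseteq U$ and $T\in\mathcal{F}$ then $S\in\mathcal{F}$. An instance of the Weighted Monotone Subset Minimization problem (WSM) is a triple $(U,w,\mathcal{F})$ with $U$ finite, $w:U\to\mathbb{N}$ and $\mathcal{F}$ a monotone set system of $U$; the goal is to find $S\in\mathcal{F}$ minimizing $w(S)=\sum_{e\in S}w(e)$; $\mathrm{opt}(U,w,\mathcal{F})=\min\{w(S)\mid S\in\mathcal{F}\}$. In the membership model the algorithm receives $U$ and $w$ as input and may query, in a single step, whether a given $S\subseteq U$ belongs to $\mathcal{F}$. An algorithm is an $\alpha$-approximation for WSM in the membership model if for every instance it returns $S\in\mathcal{F}$ with $w(S)\le\alpha\cdot\mathrm{opt}(U,w,\mathcal{F})$. For $\alpha\ge1$, $\mathrm{brute}(\alpha)=1+\exp\left(-\alpha\cdot\mathcal{H}(1/\alpha)\right)$, where $\mathcal{H}(x)=-x\ln x-(1-x)\ln(1-x)$ (with $0\ln0=0$). *)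

From Stdlib Require Import Reals.
From mathcomp Require Import all_boot.

Set Implicit Arguments.
Unset Strict Implicit.
Unset Printing Implicit Defensive.

(* Ground set U = 'I_n (n = |U|). A set system is F : {set {set 'I_n}}. *)

Definition monotone_sys (n : nat) (F : {set {set 'I_n}}) : Prop :=
  setT \in F /\ (forall T S : {set 'I_n}, T \subset S -> T \in F -> S \in F).

Definition wt (n : nat) (w : 'I_n -> nat) (S : {set 'I_n}) : nat :=
  \sum_(e in S) w e.

(* opt(U,w,F) = min { w(S) | S in F } (w(setT) is a valid start since setT \in F
   for monotone systems). *)
Definition opt (n : nat) (w : 'I_n -> nat) (F : {set {set 'I_n}}) : nat :=
  \big[minn/wt w setT]_(S in F) wt w S.

(* Deterministic algorithm in the membership model, for a fixed input (U,w):
   an adaptive query tree. *)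
Inductive qtree (n : nat) : Type :=
| Leaf : {set 'I_n} -> qtree n
| Query : {set 'I_n} -> qtree n -> qtree n -> qtree n.

Fixpoint output (n : nat) (t : qtree n) (F : {set {set 'I_n}}) : {set 'I_n} :=
  match t with
  | Leaf X => X
  | Query Q ty tn => if Q \in F then output ty F else output tn F
  end.

Fixpoint nqueries (n : nat) (t : qtree n) (F : {set {set 'I_n}}) : nat :=
  match t with
  | Leaf _ => 0
  | Query Q ty tn => (if Q \in F then nqueries ty F else nqueries tn F).+1
  end.

Definition algorithm : Type := forall n : nat, ('I_n -> nat) -> qtree n.

Definition is_approx (alpha : R) (A : algorithm) : Prop :=
  forall (n : nat) (w : 'I_n -> nat) (F : {set {set 'I_n}}),
    monotone_sys F ->
    output (A n w) F \in F /\
    Rle (INR (wt w (output (A n w) F))) (Rmult alpha (INR (opt w F))).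

(* Running time (measured by a lower bound: number of oracle queries, each a
   single step) is (b)^n * n^{O(1)}: there are constants c, N with
   #queries <= b^n * n^c for every instance with n >= N. *)
Definition runs_in (A : algorithm) (b : R) : Prop :=
  exists c N : nat, forall (n : nat) (w : 'I_n -> nat) (F : {set {set 'I_n}}),
    (N <= n)%N -> monotone_sys F ->
    Rle (INR (nqueries (A n w) F)) (Rmult (pow b n) (pow (INR n) c)).

Definition xlnx (x : R) : R := if Req_EM_T x R0 then R0 else Rmult x (ln x).

Definition entropy (x : R) : R := Rminus (Ropp (xlnx x)) (xlnx (Rminus R1 x)).

Definition brute (alpha : R) : R :=
  Rplus R1 (exp (Ropp (Rmult alpha (entropy (Rinv alpha))))).

From Stdlib Require Import Reals Lra Lia.
From mathcomp Require Import all_boot all_order zify.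
Open Scope R_scope.

(* Give the algorithm unit weights and run it against the family G_t of the
   sets that are all of U or have more than alpha t elements.  For a t-set T,
   the family F_T of the supersets of T and of the large sets is monotone with
   optimum at most t.  If no set of size at most alpha t in the transcript of
   the run on G_t contained T, the two oracles would give the same answers, so
   the algorithm would return on F_T the set it returns on G_t: feasible for F_T
   and of weight at most alpha t, this set is such a superset of T after all.
   Hence the q + 1 small sets of the transcript cover all C(n, t) t-sets, and
   each contains at most C(alpha t, t) <= exp(alpha H(1/alpha) t) of them.
   Choosing t to maximise C(n, t) exp(-alpha H(1/alpha) t) yields
   brute(alpha)^n <= (n + 1) (q + 1), which outgrows (brute(alpha) - eps)^n n^c. *)

Lemma exp_le_exp x y : x <= y -> exp x <= exp y.
Proof. by case=> [/exp_increasing/Rlt_le // | ->]; apply: Rle_refl. Qed.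

Lemma sum_f_R0_ge_term f n i :
  (forall j, 0 <= f j) -> (i <= n)%coq_nat -> f i <= sum_f_R0 f n.
Proof.
move=> f_ge0; elim: n => [|n IH] i_le /=.
  have -> : i = 0%nat by lia.
  exact: Rle_refl.
have := cond_pos_sum f n f_ge0; have := f_ge0 n.+1.
case: (Nat.eq_dec i n.+1) => [-> | ne]; first by lra.
have : f i <= sum_f_R0 f n by apply: IH; lia.
lra.
Qed.

Lemma exists_argmax (f : nat -> R) n :
  exists2 t, (t <= n)%coq_nat & forall j, (j <= n)%coq_nat -> f j <= f t.
Proof.
elim: n => [|n [t t_le t_max]].
  exists 0%nat => // j j_le; have -> : j = 0%nat by lia.
  exact: Rle_refl.
case: (Rle_lt_dec (f n.+1) (f t)) => cmp.
  exists t => [|j j_le]; first lia.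
  by case: (Nat.eq_dec j n.+1) => [-> //| ne]; apply: t_max; lia.
exists n.+1 => // j j_le.
case: (Nat.eq_dec j n.+1) => [-> | ne]; first exact: Rle_refl.
apply: Rle_trans (Rlt_le _ _ cmp); apply: t_max; lia.
Qed.

Lemma C_ge0 n k : 0 <= C n k.
Proof.
rewrite /C; apply/Rlt_le/Rdiv_lt_0_compat; first exact: INR_fact_lt_0.
by apply: Rmult_lt_0_compat; apply: INR_fact_lt_0.
Qed.

Lemma binomial_max_term {x} n : 0 < x ->
  exists2 t, (t <= n)%coq_nat & (1 + x) ^ n <= INR n.+1 * (C n t * x ^ t).
Proof.
move=> x_gt0; have [t t_le t_max] := exists_argmax (fun i => C n i * x ^ i) n.
exists t => //.
rewrite Rplus_comm Binomial.binomial Rmult_comm -sum_cte.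
apply: sum_Rle => j j_le; rewrite pow1 Rmult_1_r; exact: t_max.
Qed.

Definition entropy_rate (alpha : R) : R := alpha * entropy (/ alpha).

Lemma brute_entropy_rate alpha : brute alpha = 1 + exp (- entropy_rate alpha).
Proof. by []. Qed.

Lemma xlnx0 : xlnx 0 = 0.
Proof. by rewrite /xlnx; case: Req_EM_T. Qed.

Lemma xlnx_neq0 x : x <> 0 -> xlnx x = x * ln x.
Proof. by rewrite /xlnx; case: Req_EM_T. Qed.

Lemma entropy_rate1 : entropy_rate 1 = 0.
Proof.
rewrite /entropy_rate /entropy Rinv_1 xlnx_neq0; last lra.
by rewrite Rminus_diag xlnx0 ln_1; ring.
Qed.

Lemma entropy_rate_gt1 alpha : 1 < alpha ->
  entropy_rate alpha = - ln (/ alpha) - (alpha - 1) * ln (1 - / alpha).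
Proof.
move=> alpha_gt1.
have p_lt1 : / alpha < 1 by rewrite -Rinv_1; apply: Rinv_1_lt_contravar; lra.
have p_gt0 : 0 < / alpha by apply: Rinv_0_lt_compat; lra.
rewrite /entropy_rate /entropy !xlnx_neq0; try lra.
change R1 with 1; field; lra.
Qed.

Lemma binomial_term_le1 p k t : 0 <= p <= 1 -> (t <= k)%coq_nat ->
  C k t * p ^ t * (1 - p) ^ (k - t)%coq_nat <= 1.
Proof.
move=> p_01 t_le.
apply: (Rle_trans _ ((p + (1 - p)) ^ k)); last by rewrite Rplus_minus pow1; apply: Rle_refl.
rewrite Binomial.binomial.
apply: (sum_f_R0_ge_term (fun i => C k i * p ^ i * (1 - p) ^ (k - i)%coq_nat)) => // i.
by apply: Rmult_le_pos; [apply: Rmult_le_pos; [exact: C_ge0|]|]; apply: pow_le; lra.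
Qed.

Lemma fact_factorial n : n`! = Factorial.fact n.
Proof. by elim: n => // n IH; rewrite factS IH. Qed.

Lemma INR_binomial n k : (k <= n)%N -> INR 'C(n, k) = C n k.
Proof.
move=> k_le; have := f_equal INR (bin_fact k_le).
rewrite -!multE !mult_INR !fact_factorial /C -minusE => <-.
have := INR_fact_lt_0 k; have := INR_fact_lt_0 (n - k)%coq_nat.
by move=> ? ?; field; lra.
Qed.

Lemma binomial_le_exp_entropy_rate alpha k t :
  1 <= alpha -> INR k <= alpha * INR t -> INR 'C(k, t) <= exp (entropy_rate alpha * INR t).
Proof.
move=> alpha_ge1 k_le.
have [k_lt_t | t_le_k] := ltnP k t.
  by rewrite bin_small //; apply/Rlt_le/exp_pos.
rewrite INR_binomial //; move/leP: t_le_k => t_le_k.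
case: (Req_dec alpha 1) => [alpha1 | alpha_neq1].
  rewrite {}alpha1 Rmult_1_l in k_le *; move/INR_le: k_le => k_le.
  have -> : k = t by lia.
  rewrite -INR_binomial // binn entropy_rate1 Rmult_0_l exp_0; exact: Rle_refl.
set p := / alpha.
have p_gt0 : 0 < p by apply: Rinv_0_lt_compat; lra.
have p_lt1 : p < 1 by rewrite /p -Rinv_1; apply: Rinv_1_lt_contravar; lra.
have ln1p_lt0 : ln (1 - p) < 0 by rewrite -ln_1; apply: ln_increasing; lra.
have weight : p ^ t * (1 - p) ^ (k - t)%coq_nat
               = exp (INR t * ln p + INR (k - t)%coq_nat * ln (1 - p)).
  by rewrite exp_plus -!Rpower_pow //; lra.
have C_le : C k t <= exp (- (INR t * ln p + INR (k - t)%coq_nat * ln (1 - p))).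
  rewrite exp_Ropp -weight; apply: (Rmult_le_reg_r (p ^ t * (1 - p) ^ (k - t)%coq_nat)).
    by apply: Rmult_lt_0_compat; apply: pow_lt; lra.
  rewrite Rinv_l; last by apply: Rgt_not_eq; apply: Rmult_lt_0_compat; apply: pow_lt; lra.
  rewrite -Rmult_assoc; apply: binomial_term_le1 => //; lra.
apply: (Rle_trans _ _ _ C_le); apply: exp_le_exp.
rewrite entropy_rate_gt1 -/p; last lra.
rewrite minus_INR //; have := pos_INR t; nra.
Qed.

Lemma pow_gt_poly {q} k N : 1 < q ->
  exists2 n, (N <= n)%coq_nat & 2 * (INR n + 1) ^ k < q ^ n.
Proof.
move=> q_gt1; set h := q - 1.
(* With n = m (k + 1), Bernoulli gives q ^ n >= (m h) ^ (k + 1), which beats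
   2 (n + 1) ^ k as soon as m h ^ (k + 1) > 2 (k + 2) ^ k. *)
have h_gt0 : 0 < h by rewrite /h; lra.
have hk_gt0 : 0 < h ^ k.+1 by apply: pow_lt.
have [m0 m0_large] := INR_archimed _ (2 * (INR k + 2) ^ k) hk_gt0.
set m := (m0 + N).+1.
have m_ge1 : 1 <= INR m by rewrite -INR_1; apply: le_INR; lia.
have m_large : 2 * (INR k + 2) ^ k < INR m * h ^ k.+1.
  have : INR m0 <= INR m by apply: le_INR; lia.
  nra.
exists (m * k.+1)%coq_nat; first lia.
have poly_le : (INR (m * k.+1)%coq_nat + 1) ^ k <= INR m ^ k * (INR k + 2) ^ k.
  rewrite -Rpow_mult_distr; apply: pow_incr; rewrite mult_INR S_INR.
  have := pos_INR k; split; nra.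
have pow_ge : INR m ^ k * (INR m * h ^ k.+1) <= q ^ (m * k.+1)%coq_nat.
  have -> : INR m ^ k * (INR m * h ^ k.+1) = (INR m * h) ^ k.+1.
    by rewrite Rpow_mult_distr /=; ring.
  rewrite pow_mult.
  apply: pow_incr; split; first by apply: Rmult_le_pos; lra.
  have -> : q = 1 + h by rewrite /h; ring.
  have := poly m h h_gt0; lra.
have mk_gt0 : 0 < INR m ^ k by apply: pow_lt; lra.
have : INR m ^ k * (2 * (INR k + 2) ^ k) < INR m ^ k * (INR m * h ^ k.+1).
  exact: Rmult_lt_compat_l.
nra.
Qed.

Lemma pow_gt_poly_mul {B K} k N : 0 < B -> B < K ->
  exists2 n, (N <= n)%coq_nat & 2 * (INR n + 1) ^ k * B ^ n < K ^ n.
Proof.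
move=> B_gt0 B_lt; have q_gt1 : 1 < K / B.
  by apply: (Rmult_lt_reg_r B) => //; rewrite Rmult_1_l /Rdiv Rmult_assoc Rinv_l; lra.
have [n N_le growth] := pow_gt_poly k N q_gt1.
exists n => //; have -> : K = K / B * B by field; lra.
rewrite Rpow_mult_distr; apply: Rmult_lt_compat_r growth; exact: pow_lt.
Qed.

Fixpoint transcript n (tr : qtree n) (F : {set {set 'I_n}}) : seq {set 'I_n} :=
  match tr with
  | Leaf X => [:: X]
  | Query Q ty tn => Q :: transcript n (if Q \in F then ty else tn) F
  end.
Arguments transcript {n}.

Lemma size_transcript {n} (tr : qtree n) F : size (transcript tr F) = (nqueries tr F).+1.
Proof. by elim: tr => [X|Q ty IHy tn IHn] //=; case: (Q \in F); rewrite ?IHy ?IHn. Qed.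

Lemma output_in_transcript {n} (tr : qtree n) F : output tr F \in transcript tr F.
Proof.
elim: tr => [X|Q ty IHy tn IHn] /=; first by rewrite inE.
by case: (Q \in F); rewrite inE ?IHy ?IHn orbT.
Qed.

Lemma output_eq_on_transcript {n} (tr : qtree n) (F G : {set {set 'I_n}}) :
  {in transcript tr G, F =i G} -> output tr F = output tr G.
Proof.
elim: tr => [X|Q ty IHy tn IHn] //= FG.
rewrite FG ?mem_head //.
have FG' : {in transcript (if Q \in G then ty else tn) G, F =i G}.
  by move=> S S_in; apply: FG; rewrite inE S_in orbT.
by case: (Q \in G) FG' => [/IHy | /IHn].
Qed.

Lemma card_covered_le {T : finType} k (P : pred {set T}) (L : seq {set T}) :
  (#|[set A : {set T} | (#|A| == k) && has (fun X => P X && (A \subset X)) L]|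
    <= \sum_(X <- L | P X) 'C(#|X|, k))%N.
Proof.
elim: L => [|X L IH].
  by rewrite big_nil leqn0 cards_eq0; apply/eqP/setP => A; rewrite !inE andbF.
set D := [set A : {set T} | P X && (A \subset X) && (#|A| == k)].
have D_le : (#|D| <= if P X then 'C(#|X|, k) else 0)%N.
  rewrite /D; case: (P X) => /=.
    by rewrite -cards_draws; apply: subset_leq_card; apply/subsetP => A; rewrite !inE.
  by rewrite leqn0 cards_eq0; apply/eqP/setP => A; rewrite !inE.
rewrite big_mkcond big_cons -big_mkcond; apply: leq_trans (leq_add D_le IH).
apply: leq_trans (leq_card_setU _ _).
apply: subset_leq_card; apply/subsetP => A; rewrite !inE /=.
by case/andP=> -> /orP [->|->]; rewrite ?orbT.
Qed.

Lemma INR_sum_le (I : Type) (s : seq I) (P : pred I) (f : I -> nat) E :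
  0 <= E -> (forall i, P i -> INR (f i) <= E) ->
  INR (\sum_(i <- s | P i) f i) <= INR (size s) * E.
Proof.
move=> E_ge0 f_le; elim: s => [|i s IH]; first by rewrite big_nil /=; lra.
rewrite big_cons (_ : size (i :: s) = (size s).+1) // S_INR Rmult_plus_distr_r Rmult_1_l.
case: ifP => [/f_le fi_le | _]; last by lra.
have -> : INR (f i + \sum_(j <- s | P j) f j) = INR (f i) + INR (\sum_(j <- s | P j) f j).
  by rewrite -plus_INR.
lra.
Qed.

Definition unit_weight n : 'I_n -> nat := fun _ => 1%N.

Lemma wt_unit_weight n (S : {set 'I_n}) : wt (unit_weight n) S = #|S|.
Proof. exact: sum1_card. Qed.

Lemma opt_le_wt n (w : 'I_n -> nat) (F : {set {set 'I_n}}) S :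
  S \in F -> (opt w F <= wt w S)%N.
Proof. by move=> S_in; have := Order.TotalTheory.bigmin_le_cond (wt w setT) (wt w) S_in. Qed.

Section HardInstances.

Variables (n : nat) (alpha : R) (t : nat).

Definition large (S : {set 'I_n}) : bool :=
  if Rlt_dec (alpha * INR t) (INR #|S|) then true else false.

Definition hidden_family : {set {set 'I_n}} :=
  [set S : {set 'I_n} | (S == setT) || large S].

Definition planted_family (T : {set 'I_n}) : {set {set 'I_n}} :=
  [set S : {set 'I_n} | (T \subset S) || large S].

Lemma largeP (S : {set 'I_n}) : reflect (alpha * INR t < INR #|S|) (large S).
Proof. by rewrite /large; case: Rlt_dec => h; constructor. Qed.

Lemma large_subset {S1 S2 : {set 'I_n}} : S1 \subset S2 -> large S1 -> large S2.
Proof.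
move=> sub /largeP lt1; apply/largeP; apply: (Rlt_le_trans _ _ _ lt1).
by apply/le_INR/leP/subset_leq_card.
Qed.

Lemma hidden_family_monotone : monotone_sys hidden_family.
Proof.
split=> [|S1 S2 sub]; first by rewrite inE eqxx.
rewrite !inE => /orP [/eqP S1T | /(large_subset sub) -> ]; last by rewrite orbT.
by rewrite -subTset -S1T sub.
Qed.

Lemma planted_family_monotone T : monotone_sys (planted_family T).
Proof.
split=> [|S1 S2 sub]; first by rewrite inE subsetT.
rewrite !inE => /orP [TS1 | /(large_subset sub) -> ]; last by rewrite orbT.
by rewrite (subset_trans TS1 sub).
Qed.

Variable A : algorithm.
Hypothesis alpha_ge1 : 1 <= alpha.
Hypothesis A_approx : is_approx alpha A.

Lemma transcript_covers (T : {set 'I_n}) : #|T| = t ->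
  has (fun X => ~~ large X && (T \subset X))
      (transcript (A n (unit_weight n)) hidden_family).
Proof.
move=> cardT; apply: contraT => /hasPn none.
set tr := A n (unit_weight n).
have same : output tr (planted_family T) = output tr hidden_family.
  apply: output_eq_on_transcript => Q /none; rewrite !inE.
  case: (large Q); rewrite ?orbT ?orbF //= => TQ; rewrite (negbTE TQ).
  by apply/esym/negbTE; apply: contra TQ => /eqP ->; apply: subsetT.
have [S_in S_wt] := A_approx n (unit_weight n) _ (planted_family_monotone T).
rewrite -/tr same in S_in S_wt; set S := output tr hidden_family in S_in S_wt.
have opt_le : (opt (unit_weight n) (planted_family T) <= t)%N.
  by rewrite -cardT -wt_unit_weight; apply: opt_le_wt; rewrite inE subxx.
have S_small : ~~ large S.
  apply/largeP => lt; move/leP/le_INR: opt_le; rewrite wt_unit_weight in S_wt.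
  by move=> opt_le; nra.
move: S_in; rewrite inE (negbTE S_small) orbF => TS.
by have := none S (output_in_transcript _ _); rewrite S_small TS.
Qed.

Lemma binomial_le_queries :
  INR 'C(n, t) <= (INR (nqueries (A n (unit_weight n)) hidden_family) + 1)
                  * exp (entropy_rate alpha * INR t).
Proof.
set L := transcript (A n (unit_weight n)) hidden_family.
have C_le : ('C(n, t) <= \sum_(X <- L | ~~ large X) 'C(#|X|, t))%N.
  apply: leq_trans (card_covered_le t (fun X => ~~ large X) L).
  rewrite -{1}(card_ord n) -card_draws.
  apply: subset_leq_card; apply/subsetP => T; rewrite !inE => /eqP cardT.
  by rewrite cardT eqxx transcript_covers.
rewrite -S_INR -size_transcript -/L.
apply: (Rle_trans _ (INR (\sum_(X <- L | ~~ large X) 'C(#|X|, t)))).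
  exact/le_INR/leP.
apply: INR_sum_le => [|X /largeP small]; first exact/Rlt_le/exp_pos.
by apply: binomial_le_exp_entropy_rate => //; apply: Rnot_lt_le.
Qed.

End HardInstances.

Lemma exp_pow x k : exp x ^ k = exp (x * INR k).
Proof.
rewrite -Rpower_pow; last exact: exp_pos.
by rewrite /Rpower ln_exp Rmult_comm.
Qed.

Lemma brute_pow_le_queries {alpha} {A : algorithm} n : 1 <= alpha -> is_approx alpha A ->
  exists2 F : {set {set 'I_n}}, monotone_sys F &
    brute alpha ^ n <= INR n.+1 * (INR (nqueries (A n (unit_weight n)) F) + 1).
Proof.
move=> alpha_ge1 A_approx; set r := entropy_rate alpha.
have [t t_le max_term] := binomial_max_term n (exp_pos (- r)).
exists (hidden_family n alpha t); first exact: hidden_family_monotone.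
rewrite brute_entropy_rate; apply: (Rle_trans _ _ _ max_term).
apply: Rmult_le_compat_l; first exact: pos_INR.
have := binomial_le_queries n _ t _ alpha_ge1 A_approx.
rewrite INR_binomial; last exact/leP.
set q := INR _ + 1 => C_le.
have -> : q = q * exp (r * INR t) * exp (- r) ^ t.
  rewrite exp_pow Rmult_assoc -exp_plus (_ : r * INR t + - r * INR t = 0); last ring.
  by rewrite exp_0 Rmult_1_r.
apply: Rmult_le_compat_r C_le; apply: pow_le; exact/Rlt_le/exp_pos.
Qed.

Lemma monotone_setT n : monotone_sys [set: {set 'I_n}].
Proof. by split=> *; rewrite inE. Qed.

Lemma runs_in_base_ge0 {A : algorithm} {b} : runs_in A b -> 0 <= b.
Proof.
move=> [c [N bound]]; apply: Rnot_lt_le => b_lt0.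
(* An odd exponent makes the time bound negative. *)
have N_le : (N <= (2 * N).+1)%N by lia.
have := bound (2 * N).+1 (unit_weight _) _ N_le (monotone_setT _); apply/Rlt_not_le.
have odd_pow : b ^ (2 * N).+1 < 0.
  rewrite /= pow_mult; apply: Rmult_neg_pos => //; apply: pow_lt; nra.
apply: (Rlt_le_trans _ 0); last exact: pos_INR.
by apply: Rmult_neg_pos => //; apply: pow_lt; apply: lt_0_INR; lia.
Qed.

Lemma runs_in_le {A : algorithm} {b} B : runs_in A b -> b <= B -> runs_in A B.
Proof.
move=> A_runs b_le; have b_ge0 := runs_in_base_ge0 A_runs.
case: A_runs => c [N bound]; exists c, N => n w F N_le F_mono.
apply: (Rle_trans _ _ _ (bound n w F N_le F_mono)); apply: Rmult_le_compat_r.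
  by apply: pow_le; apply: pos_INR.
by apply: pow_incr; lra.
Qed.

Theorem corollary2p2 (alpha eps : R) :
  Rle R1 alpha -> Rlt R0 eps ->
  ~ (exists A : algorithm, is_approx alpha A /\ runs_in A (Rminus (brute alpha) eps)).
Proof.
move=> alpha_ge1 eps_gt0 [A [A_approx A_runs]].
set B := Rmax (brute alpha - eps) 1.
have B_ge1 : 1 <= B by apply: Rmax_r.
have B_lt : B < brute alpha.
  rewrite /B brute_entropy_rate; have := exp_pos (- entropy_rate alpha).
  by move=> ?; apply: Rmax_lub_lt; lra.
have [c [N bound]] := runs_in_le B A_runs (Rmax_l _ _).
have [n /leP N_le growth] := pow_gt_poly_mul c.+1 N (Rlt_le_trans _ _ _ Rlt_0_1 B_ge1) B_lt.
have [F F_mono lower] := brute_pow_le_queries n alpha_ge1 A_approx.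
have upper := bound n (unit_weight n) F N_le F_mono.
set q := INR (nqueries _ _) in lower upper; have n_ge0 := pos_INR n.
have poly_ge1 : 1 <= (INR n + 1) ^ c by apply: pow_R1_Rle; lra.
have pow_ge1 : 1 <= B ^ n by apply: pow_R1_Rle.
have q1_le : q + 1 <= 2 * (B ^ n * (INR n + 1) ^ c).
  have : INR n ^ c <= (INR n + 1) ^ c by apply: pow_incr; lra.
  have : 0 <= B ^ n by lra.
  nra.
rewrite S_INR in lower; rewrite /= in growth.
have : (INR n + 1) * (q + 1) <= (INR n + 1) * (2 * (B ^ n * (INR n + 1) ^ c)).
  by apply: Rmult_le_compat_l; lra.
lra.
Qed.
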